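(* Let $R$ be a ring, $M$ an $R$-module of finite length, and $A_1,A_2,B_1,B_2\subset M$ submodules such that $A_1$ and $A_2$ are coprime, $A_1\oplus A_2=M$, $B_1\oplus B_2=M$, and $A_1\cong B_1$. Then $A_1\oplus B_2=M$ and $B_1\oplus A_2=M$.
   Context: Modules are left modules. A module has finite length if every totally ordered set of submodules is finite. For submodules $C,D$ of $M$, $C\oplus D=M$ means the natural map $C\oplus D\to M$ is an isomorphism. An $R$-module $D$ is a divisor of $M$ if $M\cong D\oplus N$ for some $R$-module $N$. Two $R$-modules of finite length are coprime if $0$ is (up to isomorphism) the only $R$-module that is a divisor of both. *)

From HB Require Import structures.
From mathcomp Require Import all_boot all_algebra.
Set Implicit Arguments. Unset Strict Implicit. Unset Printing Implicit Defensive.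
Import GRing.Theory.
Local Open Scope ring_scope.

(* Left modules over a ring R are MathComp's [lmodType R].
   A submodule of M is represented by a predicate [S : M -> Prop]
   that is closed under the module operations. *)

Definition is_submod (R : pzRingType) (M : lmodType R) (S : M -> Prop) : Prop :=
  [/\ S 0,
      (forall x y, S x -> S y -> S (x + y)) &
      (forall (r : R) x, S x -> S (r *: x))].

Definition submod_le (R : pzRingType) (M : lmodType R) (S T : M -> Prop) : Prop :=
  forall x, S x -> T x.

(* A set of submodules is a predicate C on predicates; it is finite
   if its members are (extensionally) among finitely many s 0, ..., s (n-1). *)
Definition finite_length (R : pzRingType) (M : lmodType R) : Prop :=
  forall C : (M -> Prop) -> Prop,
    (forall S, C S -> is_submod S) ->
    (forall S T, C S -> C T -> submod_le S T \/ submod_le T S) ->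
    exists (n : nat) (s : nat -> (M -> Prop)),
      forall S, C S -> exists2 i, (i < n)%N & forall x, S x <-> s i x.

Definition internal_direct_sum (R : pzRingType) (M : lmodType R)
    (C D : M -> Prop) : Prop :=
  (forall m : M, exists c d, [/\ C c, D d & m = c + d]) /\
  (forall c1 c2 d1 d2 : M, C c1 -> C c2 -> D d1 -> D d2 ->
     c1 + d1 = c2 + d2 -> c1 = c2 /\ d1 = d2).

(* Two submodules A, B of M are isomorphic as R-modules: there is a map
   A -> B (given by its values on A) that is R-linear, injective and onto B. *)
Definition submod_iso (R : pzRingType) (M : lmodType R) (A B : M -> Prop) : Prop :=
  exists f : M -> M,
    [/\ (forall x, A x -> B (f x)),
        (forall x y, A x -> A y -> f (x + y) = f x + f y),
        (forall (r : R) x, A x -> f (r *: x) = r *: f x),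
        (forall x y, A x -> A y -> f x = f y -> x = y) &
        (forall y, B y -> exists2 x, A x & f x = y)].

(* An R-module D is a divisor of the submodule A (viewed as an R-module):
   A is isomorphic to D (+) N for some R-module N, i.e. there is an injective
   R-linear map D * N -> M whose image is exactly A. *)
Definition divisor_of_submod (R : pzRingType) (M : lmodType R)
    (D : lmodType R) (A : M -> Prop) : Prop :=
  exists (N : lmodType R) (f : {linear (D * N)%type -> M}),
    [/\ injective f,
        (forall z, A (f z)) &
        (forall y, A y -> exists z, f z = y)].

Definition trivial_module (R : pzRingType) (D : lmodType R) : Prop :=
  forall x : D, x = 0.

Definition coprime_submod (R : pzRingType) (M : lmodType R) (A B : M -> Prop) : Prop :=
  forall D : lmodType R,
    divisor_of_submod D A -> divisor_of_submod D B -> trivial_module D.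

From HB Require Import structures.
From mathcomp Require Import all_boot all_algebra.
From mathcomp Require Import boolp.
Set Implicit Arguments. Unset Strict Implicit. Unset Printing Implicit Defensive.
Import GRing.Theory.
Local Open Scope ring_scope.

(* Extend the isomorphism A1 ~ B1 and its inverse to endomorphisms Phi, Psi of M
   (Psi kills B2), and let p be the projection onto A1 along A2.  On A1,
   id = Psi (p Phi) + Psi ((1 - p) Phi), and the second summand factors through A2.
   For an endomorphism of A1 factoring through A2, Fitting's lemma makes the stable
   image of its powers a common direct summand of A1 and A2, so coprimality forces
   it to be nilpotent.  Hence Psi (p Phi) is injective on A1, so bijective by finite
   length; then Psi : A1 -> A1 and p : B1 -> A1 are bijective, and their kernels B2
   and A2 are complements of A1 and B1. *)

Section Submodules.
Variables (R : pzRingType) (M : lmodType R).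
Implicit Types (S A : M -> Prop) (f : {linear M -> M}).

Lemma submodB S : is_submod S -> forall x y, S x -> S y -> S (x - y).
Proof. by case=> _ SD SZ x y Sx Sy; rewrite -scaleN1r; apply: SD => //; apply: SZ. Qed.

Lemma is_submod_image f A : is_submod A -> is_submod (fun y => exists2 x, A x & f x = y).
Proof.
case=> A0 AD AZ; split.
- by exists 0; rewrite ?linear0.
- by move=> _ _ [x Ax <-] [y Ay <-]; exists (x + y); rewrite ?linearD //; apply: AD.
- by move=> r _ [x Ax <-]; exists (r *: x); rewrite ?linearZ_LR //; apply: AZ.
Qed.

Lemma is_submod_kernel f A : is_submod A -> is_submod (fun x => A x /\ f x = 0).
Proof.
case=> A0 AD AZ; split.
- by rewrite linear0.
- by move=> x y [Ax fx] [Ay fy]; rewrite linearD fx fy addr0; split=> //; apply: AD.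
- by move=> r x [Ax fx]; rewrite linearZ_LR fx scaler0; split=> //; apply: AZ.
Qed.

End Submodules.

Section SubmoduleType.
Variables (R : pzRingType) (M : lmodType R) (P : M -> Prop).
Hypothesis HP : is_submod P.

(* The closure proof is a phantom index: it is what lets the canonical lmodType
   instance below be found. *)
Record submod_type (HP' : is_submod P) :=
  SubmodElt { submod_val : M; _ : `[< P submod_val >] }.

Lemma submod_closed_asbool : subsemimod_closed (fun x : M => `[< P x >]).
Proof.
case: HP => P0 PD PZ; split; first split.
- exact/asboolP.
- by move=> x y /asboolP Px /asboolP Py; apply/asboolP; apply: PD.
- by move=> r x /asboolP Px; apply/asboolP; apply: PZ.
Qed.

HB.instance Definition _ := [isSub for @submod_val HP].
HB.instance Definition _ := [Choice of submod_type HP by <:].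
HB.instance Definition _ :=
  GRing.SubChoice_isSubLmodule.Build R M _ (submod_type HP) submod_closed_asbool.

Lemma submod_valP (x : submod_type HP) : P (val x).
Proof. by apply/asboolP; case: x. Qed.

End SubmoduleType.

Section Iterates.
Variables (R : pzRingType) (M : lmodType R) (w : {linear M -> M}) (n : nat).

Lemma iter_is_linear : linear (iter n w).
Proof. by elim: n => [|k IH] a x y //=; rewrite IH linearP. Qed.

HB.instance Definition _ := GRing.isLinear.Build R M M *:%R (iter n w) iter_is_linear.

End Iterates.

Section SplitDivisor.
Variables (R : pzRingType) (M : lmodType R) (I A : M -> Prop).
Hypotheses (HI : is_submod I) (HA : is_submod A).

(* The complement of [g I] in [A] is the kernel of [r]. *)
Lemma split_divisor (g r : {linear M -> M}) :
  (forall y, I y -> A (g y)) ->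
  (forall y, I y -> r (g y) = 0 -> y = 0) ->
  (forall a, A a -> exists2 y, I y & r (g y) = r a) ->
  divisor_of_submod (submod_type HI) A.
Proof.
move=> gIA rg_inj rg_onto.
have HK := is_submod_kernel r HA.
exists (submod_type HK), ((g \o val \o fst) \+ (val \o snd)); split.
- apply: raddf_inj => -[y k] /= /eqP; rewrite addr_eq0 => /eqP gy.
  have [_ rk] := submod_valP k.
  have y0 : val y = 0.
    by apply: rg_inj; [exact: submod_valP | rewrite gy linearN rk oppr0].
  have k0 : val k = 0 by rewrite -[val k]opprK -gy y0 linear0 oppr0.
  by congr (_, _); apply: val_inj; rewrite ?y0 ?k0 GRing.val0.
- move=> [y k] /=; case: HA => _ AD _.
  by apply: AD; [exact: gIA (submod_valP y) | exact: (submod_valP k).1].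
- move=> a Aa; have [y Iy ry] := rg_onto a Aa.
  have Kk : A (a - g y) /\ r (a - g y) = 0.
    by split; [apply: submodB => //; exact: gIA | rewrite linearB ry subrr].
  exists (SubmodElt HI (asboolT Iy), SubmodElt HK (asboolT Kk)) => /=.
  by rewrite addrC subrK.
Qed.

End SplitDivisor.

Section FiniteLength.
Variables (R : pzRingType) (M : lmodType R).
Hypothesis FL : finite_length M.

Lemma finite_length_chain_repeats (P : nat -> M -> Prop) :
  (forall k, is_submod (P k)) ->
  (forall i j, submod_le (P i) (P j) \/ submod_le (P j) (P i)) ->
  exists i j, (i < j)%N /\ forall x, P i x <-> P j x.
Proof.
move=> subP chainP.
have [n [s Ps]] : exists n (s : nat -> M -> Prop),
    forall S, (exists k, S = P k) -> exists2 i, (i < n)%N & forall x, S x <-> s i x.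
  by apply: FL => [S [k ->] | S T [k ->] [l ->]].
have [F PF] : {F : 'I_n.+1 -> 'I_n & forall (k : 'I_n.+1) x, P k x <-> s (F k) x}.
  apply: (@choice 'I_n.+1 'I_n (fun k i => forall x, P k x <-> s i x)) => k.
  by have [i lt_in Pi] := Ps (P k) (ex_intro _ (val k) erefl); exists (Ordinal lt_in).
have /injectivePn [a [b neq_ab Fab]] : ~~ injectiveb F.
  by apply/injectiveP => /leq_card; rewrite !card_ord ltnn.
have Pab x : P a x <-> P b x by rewrite PF Fab -PF.
case: (ltngtP a b) neq_ab => [lt_ab | lt_ba | /val_inj ->]; last by rewrite eqxx.
- by exists a, b.
- by exists b, a; split=> // x; rewrite Pab.
Qed.

Lemma ascending_chain_stationary (P : nat -> M -> Prop) :
  (forall k, is_submod (P k)) -> {homo P : i j / (i <= j)%N >-> submod_le i j} ->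
  exists i, submod_le (P i.+1) (P i).
Proof.
move=> subP homoP; have [|i [j [lt_ij Pij]]] := finite_length_chain_repeats subP.
  by move=> i j; case: (leqP i j) => [le_ij | /ltnW le_ji]; [left | right]; apply: homoP.
by exists i => x /(homoP _ _ lt_ij) /Pij.
Qed.

Lemma descending_chain_stationary (P : nat -> M -> Prop) :
  (forall k, is_submod (P k)) -> {homo P : i j / (i <= j)%N >-> submod_le j i} ->
  exists i, submod_le (P i) (P i.+1).
Proof.
move=> subP homoP; have [|i [j [lt_ij Pij]]] := finite_length_chain_repeats subP.
  by move=> i j; case: (leqP i j) => [le_ij | /ltnW le_ji]; [right | left]; apply: homoP.
by exists i => x /Pij /(homoP _ _ lt_ij).
Qed.

Section Fitting.
Variables (A : M -> Prop) (w : {linear M -> M}).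
Hypotheses (HA : is_submod A) (wA : forall x, A x -> A (w x)).

Lemma iter_stable k x : A x -> A (iter k w x).
Proof. by elim: k => [//|k IH] /IH /wA. Qed.

Lemma fitting_kernel : exists n, forall m x, A x -> iter m w x = 0 -> iter n w x = 0.
Proof.
pose K k x := A x /\ iter k w x = 0.
have [n Kn] : exists n, submod_le (K n.+1) (K n).
  apply: ascending_chain_stationary => [k | i j le_ij x [Ax wix]].
    exact: is_submod_kernel.
  by split=> //; rewrite -(subnK le_ij) iterD wix linear0.
have stable k x : A x -> iter (k + n) w x = 0 -> iter n w x = 0.
  elim: k x => [//|k IH] x Ax; rewrite addSn iterSr => /(IH _ (wA Ax)).
  by rewrite -iterSr => wx; case: (Kn x (conj Ax wx)).
exists n => m x Ax wmx; apply: (stable m) => //.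
by rewrite addnC iterD wmx linear0.
Qed.

Lemma fitting_image :
  exists n, forall m x, A x -> exists2 x', A x' & iter n w x = iter (n + m) w x'.
Proof.
pose I k y := exists2 x, A x & iter k w x = y.
have [n In] : exists n, submod_le (I n) (I n.+1).
  apply: descending_chain_stationary => [k | i j le_ij _ [x Ax <-]].
    exact: is_submod_image.
  by exists (iter (j - i) w x); [exact: iter_stable | rewrite -iterD subnKC].
exists n; elim=> [|m IH] x Ax; first by exists x; rewrite ?addn0.
have [x1 Ax1 ->] := IH x Ax.
have [x2 Ax2 e2] := In _ (ex_intro2 _ _ x1 Ax1 erefl).
by exists x2; rewrite // addnC iterD -e2 -iterD !addnS addnC.
Qed.

Lemma fitting : exists n,
  (forall m x, A x -> iter m w x = 0 -> iter n w x = 0) /\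
  (forall m x, A x -> exists2 x', A x' & iter n w x = iter (n + m) w x').
Proof.
have [n1 ker_n1] := fitting_kernel; have [n2 im_n2] := fitting_image.
exists (n1 + n2)%N; split=> [m x Ax /(ker_n1 _ _ Ax) wx | m x Ax].
  by rewrite addnC iterD wx linear0.
by have [x' Ax' e] := im_n2 m x Ax; exists x'; rewrite // iterD e -iterD addnA.
Qed.

Lemma injective_stable_onto :
  (forall x, A x -> w x = 0 -> x = 0) -> forall y, A y -> exists2 x, A x & w x = y.
Proof.
move=> w_inj y Ay; have [n im_n] := fitting_image.
have [x Ax e] := im_n 1%N y Ay; exists x => //.
have iter_inj k z : A z -> iter k w z = 0 -> z = 0.
  by elim: k z => [//|k IH] z Az; rewrite iterSr => /(IH _ (wA Az)); apply: w_inj.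
apply/eqP; rewrite eq_sym -subr_eq0; apply/eqP; apply: (iter_inj n).
  by apply: submodB => //; apply: wA.
by rewrite raddfB /= e addn1 iterSr subrr.
Qed.

End Fitting.
End FiniteLength.

Section CoprimeNilpotent.
Variables (R : pzRingType) (M : lmodType R) (A1 A2 : M -> Prop) (g t : {linear M -> M}).
Hypotheses (FL : finite_length M) (HA1 : is_submod A1) (HA2 : is_submod A2).
Hypothesis coA : coprime_submod A1 A2.
Hypotheses (gA : forall x, A1 x -> A2 (g x)) (tA : forall z, A2 z -> A1 (t z)).

(* The Fitting image [I] of a power of [t \o g] is a direct summand of [A1] and,
   through [g], of [A2]; coprimality forces [I = 0]. *)
Lemma coprime_comp_nilpotent : exists n, forall x, A1 x -> iter n (t \o g) x = 0.
Proof.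
pose w := t \o g.
have wA x : A1 x -> A1 (w x) by move/gA/tA.
have [n [ker_n im_n]] := fitting FL HA1 wA.
pose I y := exists2 x, A1 x & iter n w x = y.
have HI : is_submod I := is_submod_image (iter n w) HA1.
have IA1 y : I y -> A1 y by case=> x Ax <-; exact: iter_stable.
have I_inj k y : I y -> iter k w y = 0 -> y = 0.
  by case=> x Ax <-; rewrite -iterD; apply: ker_n.
have divA1 : divisor_of_submod (submod_type HI) A1.
  apply: (split_divisor HI HA1 (g := idfun) (r := iter n w)) => /=.
  - by move=> y /IA1.
  - exact: I_inj.
  - move=> a Aa; have [x Ax e] := im_n n a Aa.
    by exists (iter n w x); [exists x | rewrite e iterD].
have divA2 : divisor_of_submod (submod_type HI) A2.
  apply: (split_divisor HI HA2 (g := g) (r := iter n w \o t)) => /=.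
  - by move=> y /IA1/gA.
  - by move=> y Iy; rewrite -iterSr; apply: I_inj.
  - move=> a Aa; have [x Ax e] := im_n n.+1 (t a) (tA Aa).
    by exists (iter n w x); [exists x | rewrite e -iterSr -iterD addnS].
exists n => x Ax.
have Iw : I (iter n w x) by exists x.
by have /(congr1 val) := coA divA1 divA2 (SubmodElt HI (asboolT Iw)).
Qed.

End CoprimeNilpotent.

Section DirectSum.
Variables (R : pzRingType) (M : lmodType R).

Lemma direct_sum_proj (C D : M -> Prop) :
  is_submod C -> is_submod D -> internal_direct_sum C D ->
  exists p : {linear M -> M}, [/\ forall m, C (p m), forall m, D (m - p m),
    forall x, C x -> p x = x & forall z, D z -> p z = 0].
Proof.
move=> [C0 CD CZ] [D0 DD DZ] [dec uniq].
have [p pCD] : {p : M -> M & forall m, C (p m) /\ D (m - p m)}.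
  apply: (@choice M M (fun m c => C c /\ D (m - c))) => m.
  by have [c [d [Cc Dd ->]]] := dec m; exists c; rewrite addrC addKr.
have pE c d : C c -> D d -> p (c + d) = c.
  move=> Cc Dd; have [Cp Dp] := pCD (c + d).
  by have [] := uniq _ _ _ _ Cp Cc Dp Dd; rewrite ?subrKC.
have p_linear : linear p.
  move=> a x y; have [Cx Dx] := pCD x; have [Cy Dy] := pCD y.
  rewrite -{1}(subrKC (p x) x) -{1}(subrKC (p y) y) scalerDr addrACA.
  by rewrite pE //; [apply: CD => //; apply: CZ | apply: DD => //; apply: DZ].
exists (HB.pack_for {linear M -> M} p (GRing.isLinear.Build R M M *:%R p p_linear)).
split=> [m | m | x Cx | z Dz] /=.
- exact: (pCD m).1.
- exact: (pCD m).2.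
- by rewrite -{1}[x]addr0 pE.
- by rewrite -[z]add0r pE.
Qed.

Lemma direct_sum_kernel_complement (C D : M -> Prop) (h : {linear M -> M}) :
  is_submod C -> (forall m, D m <-> h m = 0) ->
  (forall m, exists2 c, C c & h c = h m) ->
  (forall c, C c -> h c = 0 -> c = 0) -> internal_direct_sum C D.
Proof.
move=> HC kerD h_onto h_inj; split=> [m | c1 c2 d1 d2 Cc1 Cc2 Dd1 Dd2 e].
  have [c Cc hc] := h_onto m; exists c, (m - c); split=> //.
    by apply/kerD; rewrite raddfB /= hc subrr.
  by rewrite addrC subrK.
have hc : h c1 = h c2.
  have [hd1 hd2] := (proj1 (kerD d1) Dd1, proj1 (kerD d2) Dd2).
  by have := congr1 h e; rewrite !raddfD /= hd1 hd2 !addr0.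
have /eqP : c1 - c2 = 0 by apply: h_inj; [exact: submodB | rewrite raddfB /= hc subrr].
rewrite subr_eq0 => /eqP c12; split=> //.
by move: e; rewrite c12 => /addrI.
Qed.

End DirectSum.

Section LinearExtension.
Variables (R : pzRingType) (M : lmodType R).

Lemma linear_extension (A C : M -> Prop) (phi : M -> M) :
  is_submod A -> is_submod C -> internal_direct_sum A C ->
  (forall x y, A x -> A y -> phi (x + y) = phi x + phi y) ->
  (forall r x, A x -> phi (r *: x) = r *: phi x) ->
  exists Phi : {linear M -> M},
    (forall x, A x -> Phi x = phi x) /\ (forall z, C z -> Phi z = 0).
Proof.
move=> HA HC dsAC phiD phiZ.
have [p [pA _ p_id p0]] := direct_sum_proj HA HC dsAC.
have Phi_linear : linear (phi \o p).
  by case: HA => _ _ AZ a x y /=; rewrite linearP phiD ?phiZ //; apply: AZ.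
exists (HB.pack_for {linear M -> M} (phi \o p)
  (GRing.isLinear.Build R M M *:%R _ Phi_linear)).
split=> [x Ax | z Cz] /=; first by rewrite p_id.
case: HA => A0 _ _; rewrite p0 //.
by apply: (addrI (phi 0)); rewrite -phiD // !addr0.
Qed.

Lemma submod_iso_lift (A1 A2 B1 B2 : M -> Prop) :
  is_submod A1 -> is_submod A2 -> is_submod B1 -> is_submod B2 ->
  internal_direct_sum A1 A2 -> internal_direct_sum B1 B2 -> submod_iso A1 B1 ->
  exists Phi Psi : {linear M -> M},
    [/\ forall x, A1 x -> B1 (Phi x), forall m, A1 (Psi m),
        forall m, B2 m <-> Psi m = 0,
        forall x, A1 x -> Psi (Phi x) = x & forall y, B1 y -> Phi (Psi y) = y].
Proof.
move=> HA1 HA2 HB1 HB2 dsA dsB [phi [phiB phiD phiZ phi_inj phi_onto]].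
have [psi psiP] : {psi : M -> M & forall y, B1 y -> A1 (psi y) /\ phi (psi y) = y}.
  apply: (@choice M M (fun y x => B1 y -> A1 x /\ phi x = y)) => y.
  have [/phi_onto [x Ax <-] | nBy] := pselect (B1 y); first by exists x.
  by exists 0 => /nBy.
case: (HA1) => A0 AD AZ; case: (HB1) => B0 BD BZ.
have psiD x y : B1 x -> B1 y -> psi (x + y) = psi x + psi y.
  move=> Bx By; have [Ax phix] := psiP x Bx; have [Ay phiy] := psiP y By.
  have [Axy phixy] := psiP (x + y) (BD _ _ Bx By).
  by apply: phi_inj => //; [exact: AD | rewrite phiD // phix phiy].
have psiZ r y : B1 y -> psi (r *: y) = r *: psi y.
  move=> By; have [Ay phiy] := psiP y By; have [Ary phiry] := psiP _ (BZ r _ By).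
  by apply: phi_inj => //; [exact: AZ | rewrite phiZ // phiy].
have [Phi [PhiE _]] := linear_extension HA1 HA2 dsA phiD phiZ.
have [Psi [PsiE Psi0]] := linear_extension HB1 HB2 dsB psiD psiZ.
have psi_phi x : A1 x -> psi (phi x) = x.
  by move=> Ax; have [Apsi phipsi] := psiP _ (phiB _ Ax); apply: phi_inj.
have Psi_decomp m : exists2 b, B1 b & B2 (m - b) /\ Psi m = psi b.
  have [b [d [Bb Dd ->]]] := dsB.1 m.
  by exists b; rewrite // addrAC subrr add0r raddfD /= (Psi0 d Dd) addr0 PsiE.
exists Phi, Psi; split=> [x Ax | m | m | x Ax | y By].
- by rewrite PhiE //; apply: phiB.
- by have [b Bb [_ ->]] := Psi_decomp m; apply: (psiP b Bb).1.
- split=> [/Psi0 // | Psim0]; have [b Bb [Dmb Psim]] := Psi_decomp m.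
  have b0 : b = 0.
    by rewrite -(psiP b Bb).2 -Psim Psim0 -(PhiE 0 A0) linear0.
  by rewrite b0 subr0 in Dmb.
- by rewrite PhiE // PsiE ?psi_phi //; apply: phiB.
- by have [Ay phiy] := psiP y By; rewrite PsiE // PhiE.
Qed.

End LinearExtension.

Section Exchange.
Variables (R : pzRingType) (M : lmodType R) (A1 A2 B1 B2 : M -> Prop).
Hypotheses (FL : finite_length M) (HA1 : is_submod A1) (HA2 : is_submod A2).
Hypotheses (HB1 : is_submod B1) (coA : coprime_submod A1 A2).
Variables (p Phi Psi : {linear M -> M}).
Hypotheses (pA1 : forall m, A1 (p m)) (pA2 : forall m, A2 (m - p m)).
Hypothesis p0 : forall z, A2 z -> p z = 0.
Hypotheses (PhiB : forall x, A1 x -> B1 (Phi x)) (PsiA : forall m, A1 (Psi m)).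
Hypothesis kerPsi : forall m, B2 m <-> Psi m = 0.
Hypotheses (PsiPhi : forall x, A1 x -> Psi (Phi x) = x).
Hypotheses (PhiPsi : forall y, B1 y -> Phi (Psi y) = y).

(* On [A1], [id = Psi \o p \o Phi + Psi \o (Phi - p \o Phi)], and the second
   summand factors through [A2], hence is nilpotent. *)
Lemma Psi_p_Phi_inj x : A1 x -> Psi (p (Phi x)) = 0 -> x = 0.
Proof.
have [n w_nil] := coprime_comp_nilpotent FL HA1 HA2 coA (g := Phi \- (p \o Phi))
  (fun x _ => pA2 (Phi x)) (fun z _ => PsiA z).
move=> Ax e; have wx : Psi (Phi x - p (Phi x)) = x.
  by rewrite raddfB /= e subr0 PsiPhi.
by rewrite -(w_nil x Ax); elim: n {w_nil} => //= n <-; rewrite wx.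
Qed.

Lemma Psi_p_Phi_onto y : A1 y -> exists2 x, A1 x & Psi (p (Phi x)) = y.
Proof.
exact: (injective_stable_onto FL HA1 (w := Psi \o (p \o Phi)) (fun x _ => PsiA _)
  Psi_p_Phi_inj).
Qed.

Lemma p_Phi_onto y : A1 y -> exists2 x, A1 x & p (Phi x) = y.
Proof.
apply: (injective_stable_onto FL HA1 (w := p \o Phi) (fun x _ => pA1 _)) => x Ax /= e.
by apply: Psi_p_Phi_inj; rewrite // e linear0.
Qed.

Lemma direct_sum_A1_B2 : internal_direct_sum A1 B2.
Proof.
apply: (direct_sum_kernel_complement (h := Psi) HA1 kerPsi) => [m | c Ac Psic].
  by have [x Ax e] := Psi_p_Phi_onto (PsiA m); exists (p (Phi x)).
have [x Ax px] := p_Phi_onto Ac.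
by move: Psic; rewrite -px => /(Psi_p_Phi_inj Ax) ->; rewrite !linear0.
Qed.

Lemma direct_sum_B1_A2 : internal_direct_sum B1 A2.
Proof.
have kerp m : A2 m <-> p m = 0.
  by split=> [/p0 // | pm]; have := pA2 m; rewrite pm subr0.
apply: (direct_sum_kernel_complement (h := p) HB1 kerp) => [m | b Bb pb].
  by have [x Ax e] := p_Phi_onto (pA1 m); exists (Phi x); [apply: PhiB | rewrite e].
have Psib0 : Psi b = 0.
  by apply: Psi_p_Phi_inj => //; rewrite PhiPsi // pb linear0.
by rewrite -(PhiPsi Bb) Psib0 linear0.
Qed.

End Exchange.

Theorem proposition2p9 (R : pzRingType) (M : lmodType R)
    (A1 A2 B1 B2 : M -> Prop) :
  finite_length M ->
  is_submod A1 -> is_submod A2 -> is_submod B1 -> is_submod B2 ->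
  coprime_submod A1 A2 ->
  internal_direct_sum A1 A2 ->
  internal_direct_sum B1 B2 ->
  submod_iso A1 B1 ->
  internal_direct_sum A1 B2 /\ internal_direct_sum B1 A2.
Proof.
move=> FL HA1 HA2 HB1 HB2 coA dsA dsB isoAB.
have [p [pA1 pA2 _ p0]] := direct_sum_proj HA1 HA2 dsA.
have [Phi [Psi [PhiB PsiA kerPsi PsiPhi PhiPsi]]] :=
  submod_iso_lift HA1 HA2 HB1 HB2 dsA dsB isoAB.
split.
- exact: (direct_sum_A1_B2 FL HA1 HA2 coA pA1 pA2 PsiA kerPsi PsiPhi).
- exact: (direct_sum_B1_A2 FL HA1 HA2 HB1 coA pA1 pA2 p0 PhiB PsiA PsiPhi PhiPsi).
Qed.
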